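(* For every $n\in\mathbb{N}$, let $$\Omega_n=\{x\in(0,1)\setminus\mathbb{Q}:\ g_k(x)\in\{1,2,\dots,n\}\ \text{for all } k\in\mathbb{N}\},$$ where $g_k(x)$ denotes the $k$-th symbol of $x$ in its $\bar O^1$-expansion. Then the Hausdorff dimension of $\Omega_n$ is $\dim_H(\Omega_n)=0$ for every $n\in\mathbb{N}$.
   Context: Every irrational $x\in(0,1)$ has a unique representation ($\bar O^1$-expansion, the difference form of the Ostrogradsky–Sierpiński–Pierce expansion) $$x=\sum_{k=1}^\infty\frac{(-1)^{k-1}}{g_1(g_1+g_2)\cdots(g_1+g_2+\dots+g_k)},\qquad g_k=g_k(x)\in\mathbb{N}=\{1,2,3,\dots\},$$ and conversely every infinite sequence of positive integers $(g_k)$ gives an irrational number in $(0,1)$ via this series. The numbers $g_k(x)$ are called the $\bar O^1$-symbols of $x$. *)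

From HB Require Import structures.
From mathcomp Require Import all_boot all_order all_algebra.
From mathcomp Require Import all_classical all_reals all_analysis.
Set Implicit Arguments. Unset Strict Implicit. Unset Printing Implicit Defensive.
Import Order.TTheory GRing.Theory Num.Theory.
Import numFieldNormedType.Exports.
Local Open Scope classical_set_scope.
Local Open Scope ring_scope.

Section Defs.
Variable R : realType.

(* A sequence of symbols g is 0-indexed: g 0 = g_1, g 1 = g_2, ...        *)
Definition Obar_den (g : nat -> nat) (k : nat) : nat :=
  \prod_(i < k.+1) (\sum_(j < i.+1) g j).

Definition Obar_term (g : nat -> nat) (k : nat) : R :=
  (-1) ^+ k / (Obar_den g k)%:R.

Definition is_Obar_expansion (x : R) (g : nat -> nat) : Prop :=
  (forall k, (0 < g k)%N) /\ series (Obar_term g) @ \oo --> x.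

(* The O-bar^1 symbols of x (well defined, by existence and uniqueness of
   the expansion, for irrational x in (0,1)); g_k(x) = Obar_symbols x (k-1). *)
Definition Obar_symbols (x : R) : nat -> nat :=
  get [set g | is_Obar_expansion x g].

Definition irrational (x : R) : Prop := ~ exists q : rat, x = ratr q.

Definition Omega (n : nat) : set R :=
  [set x | 0 < x < 1 /\ irrational x /\
           forall k, (1 <= Obar_symbols x k <= n)%N].

Local Open Scope ereal_scope.

(* diameter, with the convention diam(empty) = 0 *)
Definition diam (A : set R) : \bar R :=
  ereal_sup ([set 0] `|` [set (`|x - y|%R)%:E | x in A & y in A]).

Definition diam_pow (s : R) (A : set R) : \bar R :=
  if asbool (A = set0) then 0
  else if diam A is r%:E then (r `^ s)%:E else +oo.

Definition delta_cover (delta : R) (E : set R) (U : nat -> set R) : Prop :=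
  E `<=` \bigcup_i U i /\ forall i, diam (U i) <= delta%:E.

Definition hausdorff_content (s delta : R) (E : set R) : \bar R :=
  ereal_inf [set \sum_(0 <= i <oo) diam_pow s (U i) | U in delta_cover delta E].

(* H^s = lim_{delta -> 0+} H^s_delta = sup_{delta > 0} H^s_delta *)
Definition hausdorff_measure (s : R) (E : set R) : \bar R :=
  ereal_sup [set hausdorff_content s delta E | delta in [set d : R | (0 < d)%R]].

Definition hausdorff_dim (E : set R) : \bar R :=
  ereal_inf [set s%:E | s in [set s : R | (0 <= s)%R /\ hausdorff_measure s E = 0]].

End Defs.

From HB Require Import structures.
From mathcomp Require Import all_boot all_order all_algebra.
From mathcomp Require Import all_classical all_reals all_analysis.
From mathcomp Require Import zify ring lra.
Set Implicit Arguments. Unset Strict Implicit. Unset Printing Implicit Defensive.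
Import Order.TTheory GRing.Theory Num.Theory.
Import numFieldNormedType.Exports.
Local Open Scope classical_set_scope.
Local Open Scope ring_scope.

(* Since every symbol is at least 1, the k-th denominator
   g_1 (g_1 + g_2) ... (g_1 + ... + g_k) is at least k!, so the alternating
   series lies within 2/k! of its k-th partial sum. The points of Omega_n
   sharing their first k symbols therefore form a set of diameter at most
   4/k!, and n^k such sets cover Omega_n. For s > 0 the resulting bound
   n^k (4/k!)^s = (4 a^k / k!)^s, with a = n^(1/s), tends to 0, so every
   H^s with s > 0 vanishes on Omega_n. *)

Lemma leq_prefix_sum (g : nat -> nat) (g_gt0 : forall j, (0 < g j)%N) i :
  (i.+1 <= \sum_(j < i.+1) g j)%N.
Proof.
rewrite -[X in (X <= _)%N]card_ord -sum1_card.
by apply: leq_sum => j _; apply: g_gt0.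
Qed.

Lemma fact_le_Obar_den (g : nat -> nat) (g_gt0 : forall j, (0 < g j)%N) k :
  (k.+1`! <= Obar_den g k)%N.
Proof.
elim: k => [|k IHk].
  rewrite /Obar_den big_ord_recr big_ord0 /= mul1n.
  exact: leq_prefix_sum g_gt0 0.
rewrite /Obar_den big_ord_recr /= -/(Obar_den g k) factS mulnC.
by rewrite leq_mul // leq_prefix_sum.
Qed.

Lemma leq_fact_mul_exp2 k i : (k`! * 2 ^ i <= (k + i).+1`!)%N.
Proof.
elim: i => [|i IHi]; first by rewrite muln1 addn0 factS leq_pmull.
rewrite addnS factS expnS mulnCA leq_mul //; lia.
Qed.

Section ObarSeries.
Variable R : realType.
Implicit Types (g : nat -> nat) (x : R).

Lemma norm_Obar_term g j : `|Obar_term R g j| = (Obar_den g j)%:R^-1.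
Proof.
by rewrite /Obar_term normrM normrX normrN1 expr1n mul1r normfV normr_nat.
Qed.

Lemma norm_Obar_term_le g (g_gt0 : forall j, (0 < g j)%N) k N :
  `|Obar_term R g (k + N)| <= (k`!%:R * 2 ^+ N)^-1.
Proof.
have den_ge := fact_le_Obar_den g_gt0 (k + N).
rewrite norm_Obar_term lef_pV2 ?posrE ?mulr_gt0 ?exprn_gt0 ?ltr0n ?fact_gt0 //.
  by rewrite -natrX -natrM ler_nat (leq_trans (leq_fact_mul_exp2 k N)).
exact: leq_trans (fact_gt0 _) den_ge.
Qed.

(* [(2 - 2 / 2^N) / k!] is the exact value of [\sum_(j < N) 1 / (k! 2^j)],
   which makes the induction go through. *)
Lemma Obar_series_increment_le g (g_gt0 : forall j, (0 < g j)%N) k N :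
  `|series (Obar_term R g) (k + N)%N - series (Obar_term R g) k|
    <= (2 - 2 / 2 ^+ N) / k`!%:R.
Proof.
elim: N => [|N IHN].
  by rewrite addn0 subrr normr0 expr0 divr1 subrr mul0r.
rewrite addnS seriesSr addrAC (le_trans (ler_normD _ _)) //.
apply: le_trans (lerD IHN (norm_Obar_term_le g_gt0 k N)) _.
have fact_neq0 : k`!%:R != 0 :> R by rewrite pnatr_eq0 -lt0n fact_gt0.
rewrite [leRHS](_ : _ = (2 - 2 / 2 ^+ N) / k`!%:R + (k`!%:R * 2 ^+ N)^-1) //.
by rewrite exprS; field; rewrite fact_neq0 expf_neq0.
Qed.

Lemma Obar_expansion_dist_le x g k : is_Obar_expansion x g ->
  `|x - series (Obar_term R g) k| <= 2 / k`!%:R.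
Proof.
move=> [g_gt0 cvg_x].
set P := series _ k; set T := 2 / _.
have kfact_gt0 : 0 < k`!%:R :> R by rewrite ltr0n fact_gt0.
have near_P : \forall m \near \oo, `|series (Obar_term R g) m - P| <= T.
  exists k => // m /= km; rewrite -(subnKC km).
  apply: le_trans (Obar_series_increment_le g_gt0 k (m - k)) _.
  by rewrite ler_pM2r ?invr_gt0 // lerBlDr lerDl divr_ge0 // exprn_ge0.
have cvg_dist : (fun m => `|series (Obar_term R g) m - P|) @ \oo --> `|x - P|.
  exact: cvg_norm (cvgB cvg_x (cvg_cst P)).
exact: (closed_cvg _ (@closed_le _ T) near_P _ cvg_dist).
Qed.

Lemma eq_Obar_series g h k : (forall j, (j < k)%N -> g j = h j) ->
  series (Obar_term R g) k = series (Obar_term R h) k.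
Proof.
move=> eq_gh; rewrite !seriesEnat /=; apply: eq_big_nat => j /andP[_ jk].
rewrite /Obar_term /Obar_den; congr (_ / _%:R).
apply: eq_bigr => i _; apply: eq_bigr => l _; apply: eq_gh.
by have := ltn_ord l; have := ltn_ord i; lia.
Qed.

End ObarSeries.

Section Diameter.
Variable R : realType.
Implicit Types (A : set R) (s D : R).

Lemma diam_ge0 A : (0 <= diam A)%E.
Proof. by apply: le_ereal_sup_tmp; exists 0%E => //; left. Qed.

Lemma diam_le A D : 0 <= D ->
  (forall x y, A x -> A y -> `|x - y| <= D) -> (diam A <= D%:E)%E.
Proof.
move=> D_ge0 A_dist; apply: ge_ereal_sup => _ [->|[x Ax [y Ay <-]]].
  by rewrite lee_fin.
by rewrite lee_fin A_dist.
Qed.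

Lemma diam_pow_ge0 s A : (0 <= diam_pow s A)%E.
Proof.
rewrite /diam_pow; case: ifP => _ //.
by case: (diam A) => [r| |] //; rewrite lee_fin powR_ge0.
Qed.

Lemma diam_pow_set0 s : diam_pow s (@set0 R) = 0%E.
Proof. by rewrite /diam_pow asboolT. Qed.

Lemma diam_pow_le s A D : 0 <= s -> 0 <= D ->
  (forall x y, A x -> A y -> `|x - y| <= D) -> (diam_pow s A <= (D `^ s)%:E)%E.
Proof.
move=> s_ge0 D_ge0 A_dist; rewrite /diam_pow.
case: ifP => _; first by rewrite lee_fin powR_ge0.
have := diam_le D_ge0 A_dist; have := diam_ge0 A.
case: (diam A) => [r| |] //= r_ge0 r_le.
by rewrite lee_fin ge0_ler_powR // ?nnegrE -?lee_fin.
Qed.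

Definition cover_of_seq (As : seq (set R)) (i : nat) : set R := nth set0 As i.

Lemma cover_of_seq_sum_le (As : seq (set R)) s D : 0 <= s -> 0 <= D ->
  (forall i x y, cover_of_seq As i x -> cover_of_seq As i y -> `|x - y| <= D) ->
  (\sum_(0 <= i <oo) diam_pow s (cover_of_seq As i)
    <= ((size As)%:R * D `^ s)%:E)%E.
Proof.
move=> s_ge0 D_ge0 As_dist.
have -> : (\sum_(0 <= i <oo) diam_pow s (cover_of_seq As i) =
           \sum_(0 <= i < size As) diam_pow s (cover_of_seq As i))%E.
  apply: lim_near_cst => //; exists (size As) => // m /= le_m.
  rewrite (@big_cat_nat _ _ _ (size As) 0 m _ _ (leq0n _) le_m) /=.
  rewrite [X in (_ + X)%E]big_nat_cond [X in (_ + X)%E]big1 ?adde0 //.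
  move=> i /andP[/andP[le_i _] _].
  by rewrite /cover_of_seq nth_default // diam_pow_set0.
apply: (@le_trans _ _ (\sum_(0 <= i < size As) (D `^ s)%:E)%E).
  by apply: lee_sum => i _; apply: diam_pow_le => //; apply: As_dist.
by rewrite sumEFin sumr_const_nat subn0 lee_fin mulr_natl.
Qed.

End Diameter.

Section Cylinders.
Variable R : realType.
Variables n k : nat.

Definition Obar_cylinder (f : {ffun 'I_k -> 'I_n.+1}) : set R :=
  [set x | exists g, is_Obar_expansion x g /\ forall j : 'I_k, g j = (f j).+1].

Definition Obar_cylinders : seq (set R) :=
  [seq Obar_cylinder f | f <- enum {ffun 'I_k -> 'I_n.+1}].

Lemma size_Obar_cylinders : size Obar_cylinders = (n.+1 ^ k)%N.
Proof. by rewrite size_map -cardE card_ffun !card_ord. Qed.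

Lemma Obar_cylinder_dist_le f x y : Obar_cylinder f x -> Obar_cylinder f y ->
  `|x - y| <= 4 / k`!%:R.
Proof.
move=> [g [x_g g_f]] [h [y_h h_f]].
have := Obar_expansion_dist_le k x_g; have := Obar_expansion_dist_le k y_h.
rewrite -(@eq_Obar_series R g h k); last first.
  by move=> j jk; rewrite (g_f (Ordinal jk)) (h_f (Ordinal jk)).
rewrite !ler_norml => /andP[? ?] /andP[? ?]; apply/andP; split; lra.
Qed.

Lemma Obar_cylinders_dist_le i x y :
  cover_of_seq Obar_cylinders i x -> cover_of_seq Obar_cylinders i y ->
  `|x - y| <= 4 / k`!%:R.
Proof.
rewrite /cover_of_seq; have [i_lt|i_ge] := ltnP i (size Obar_cylinders).
  rewrite size_map in i_lt.
  by rewrite (nth_map [ffun=> ord0]) //; apply: Obar_cylinder_dist_le.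
by rewrite nth_default.
Qed.

Lemma Omega_sub_Obar_cylinders :
  Omega n.+1 `<=` \bigcup_i cover_of_seq Obar_cylinders i.
Proof.
move=> x [_ [_ g_bound]]; set g := Obar_symbols x in g_bound.
(* Without an expansion, [get] returns the constant sequence 0, which
   violates [1 <= g_k]. *)
have x_g : is_Obar_expansion x g.
  have [ex|nex] := pselect (exists g, is_Obar_expansion x g).
    exact: getPex.
  move: (g_bound 0%N); rewrite /g /Obar_symbols getPN // => h x_h.
  by apply: nex; exists h.
pose f : {ffun 'I_k -> 'I_n.+1} := [ffun j : 'I_k => inord (g j).-1].
exists (index f (enum {ffun 'I_k -> 'I_n.+1})) => //.
rewrite /cover_of_seq (nth_map [ffun=> ord0]) ?index_mem ?mem_enum //.
rewrite nth_index ?mem_enum //; exists g; split => // j.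
by rewrite ffunE inordK; have := g_bound j; lia.
Qed.

End Cylinders.

Section HausdorffDimension.
Variable R : realType.
Implicit Types (E : set R) (s delta : R).

Lemma hausdorff_content_eq0 s delta E :
  (forall eps, 0 < eps -> exists2 U, delta_cover delta E U &
     (\sum_(0 <= i <oo) diam_pow s (U i) <= eps%:E)%E) ->
  hausdorff_content s delta E = 0%E.
Proof.
move=> small_cover; apply/eqP; rewrite eq_le; apply/andP; split; last first.
  apply: le_ereal_inf_tmp => _ [U _ <-].
  by apply: nneseries_ge0 => i _ _; apply: diam_pow_ge0.
apply/lee_addgt0Pr => eps eps_gt0; rewrite add0e.
have [U U_cover U_sum] := small_cover eps eps_gt0.
apply: ge_ereal_inf; exists (\sum_(0 <= i <oo) diam_pow s (U i))%E => //.
by exists U.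
Qed.

Lemma hausdorff_measure_eq0 s E :
  (forall delta, 0 < delta -> hausdorff_content s delta E = 0%E) ->
  hausdorff_measure s E = 0%E.
Proof.
move=> content0; apply/eqP; rewrite eq_le; apply/andP; split.
  by apply: ge_ereal_sup => _ [delta delta_gt0 <-]; rewrite content0.
apply: le_ereal_sup_tmp; exists 0%E => //.
by exists 1; rewrite ?content0 //= ltr01.
Qed.

Lemma hausdorff_dim_eq0 E :
  (forall s, 0 < s -> hausdorff_measure s E = 0%E) -> hausdorff_dim E = 0%E.
Proof.
move=> measure0; apply/eqP; rewrite eq_le; apply/andP; split.
  apply/lee_addgt0Pr => eps eps_gt0; rewrite add0e.
  apply: ge_ereal_inf; exists eps%:E => //.
  by exists eps => //; split; [exact: ltW | exact: measure0].
by apply: le_ereal_inf_tmp => _ [s [s_ge0 _] <-]; rewrite lee_fin.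
Qed.

End HausdorffDimension.

Section FactorialDecay.
Variable R : realType.

Lemma powRVK (s x : R) : s != 0 -> 0 <= x -> (x `^ s^-1) `^ s = x.
Proof. by move=> s_neq0 x_ge0; rewrite -powRrM mulVf // powRr1. Qed.

Lemma near_fact_le (c delta : R) : 0 < c -> 0 < delta ->
  \forall k \near \oo, c / k`!%:R <= delta.
Proof.
move=> c_gt0 delta_gt0; have ratio_gt0 : 0 < delta / c by rewrite divr_gt0.
apply: filterS (cvgr_le _ (cvg_exp_coeff (1 : R)) _ ratio_gt0) => k /=.
by rewrite /exp_coeff /= expr1n mul1r ler_pdivlMr // mulrC.
Qed.

(* With a = N^(1/s) the quantity equals (c a^k / k!)^s, and a^k / k! -> 0. *)
Lemma near_expn_fact_powR_le (N : nat) (c s eps : R) :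
  0 < c -> 0 < s -> 0 < eps ->
  \forall k \near \oo, (N ^ k)%:R * (c / k`!%:R) `^ s <= eps.
Proof.
move=> c_gt0 s_gt0 eps_gt0; set a := N%:R `^ s^-1.
have s_neq0 : s != 0 by rewrite gt_eqF.
have a_ge0 : 0 <= a := powR_ge0 _ _.
have rate_gt0 : 0 < eps `^ s^-1 / c by rewrite divr_gt0 ?powR_gt0.
apply: filterS (cvgr_le _ (cvg_exp_coeff a) _ rate_gt0) => k /=.
rewrite /exp_coeff /= => coef_le.
have kfact_gt0 : 0 < k`!%:R :> R by rewrite ltr0n fact_gt0.
have quot_ge0 : 0 <= c / k`!%:R by rewrite divr_ge0 ?ltW.
have -> : (N ^ k)%:R * (c / k`!%:R) `^ s = (c / k`!%:R * a ^+ k) `^ s.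
  rewrite [RHS]powRM ?exprn_ge0 // mulrC; congr (_ * _).
  by rewrite -powR_mulrn // powRAC powRVK // powR_mulrn // natrX.
rewrite -[leRHS](powRVK s_neq0 (ltW eps_gt0)).
apply: (ge0_ler_powR (ltW s_gt0)).
- by rewrite nnegrE mulr_ge0 ?exprn_ge0.
- by rewrite nnegrE powR_ge0.
- by rewrite mulrAC -mulrA mulrC -ler_pdivlMr.
Qed.

End FactorialDecay.

Theorem theorem3 (R : realType) (n : nat) (hn : (1 <= n)%N) :
  hausdorff_dim (@Omega R n) = 0%E.
Proof.
case: n hn => [//|n] _.
apply: hausdorff_dim_eq0 => s s_gt0.
apply: hausdorff_measure_eq0 => delta delta_gt0.
apply: hausdorff_content_eq0 => eps eps_gt0.
near \oo => k.
have diam_le_delta : 4 / k`!%:R <= delta by near: k; exact: near_fact_le.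
have sum_le_eps : (n.+1 ^ k)%:R * (4 / k`!%:R) `^ s <= eps.
  by near: k; exact: near_expn_fact_powR_le.
have bound_ge0 : 0 <= 4 / k`!%:R :> R.
  by rewrite divr_ge0 // ltW // ltr0n fact_gt0.
have cylinders_dist := @Obar_cylinders_dist_le R n k.
exists (cover_of_seq (Obar_cylinders R n k)).
  split=> [|i]; first exact: Omega_sub_Obar_cylinders.
  by apply: le_trans (diam_le bound_ge0 (cylinders_dist i)) _; rewrite lee_fin.
apply: le_trans (cover_of_seq_sum_le (ltW s_gt0) bound_ge0 cylinders_dist) _.
by rewrite size_Obar_cylinders lee_fin.
Unshelve. all: by end_near. Qed.
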